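(* Let $T=([p],E)$ be an undirected tree and let $e=u-v$ be a non-leaf edge of $T$. Let $T_u,T_v$ be the trees obtained by deleting $e$, taking the connected components $T'_u\ni u$ and $T'_v\ni v$, and adding $e$ back to each. Let $Q=\{\operatorname{parting}(\mathcal{T},e):\mathcal{T}\in\mathrm{meq}(T)\}\subseteq\mathrm{meq}(T_u)\times\mathrm{meq}(T_v)$. Then $I_T=I_{T_u}\times_QI_{T_v}$, where the variable $z_{\mathcal{T}}$ of the ambient ring of $I_T$ is identified with the variable $z_{\operatorname{parting}(\mathcal{T},e)}$ of $\mathbb{K}[z_q:q\in Q]$.
   Context: A DAG $\mathcal{G}$ on $[p]$ has parent sets $\mathrm{pa}_{\mathcal{G}}(i)=\{j: j\to i\}$. Its characteristic imset $c_{\mathcal{G}}$ assigns to each $S\subseteq[p]$, $|S|\ge2$, the value $1$ if some $i\in S$ has $S\setminus\{i\}\subseteq\mathrm{pa}_{\mathcal{G}}(i)$, and $0$ otherwise. A v-structure is a triple $i\to j\leftarrow k$ with $i,k$ non-adjacent. The pattern of $\mathcal{G}$ is the partially directed graph obtained by undirecting every edge not belonging to a v-structure; two DAGs are Markov equivalent iff they have the same pattern (equivalently the same skeleton and v-structures, equivalently the same characteristic imset). For an undirected graph $G$, $\mathrm{meq}(G)$ is the set of patterns of DAGs with skeleton $G$; for $\mathcal{P}\in\mathrm{meq}(G)$ fix a DAG $\mathcal{G}(\mathcal{P})$ with that pattern. The characteristic imset ideal $I_G$ is the kernel of $\psi_G:\mathbb{K}[z_{\mathcal{P}}:\mathcal{P}\in\mathrm{meq}(G)]\to\mathbb{K}[t_S:S\subseteq[p],|S|\ge2]$,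 $z_{\mathcal{P}}\mapsto\prod_{S:c_{\mathcal{G}(\mathcal{P})}(S)=1}t_S$. A non-leaf edge is an edge neither of whose endpoints is a leaf. For $\mathcal{T}\in\mathrm{meq}(T)$, $\operatorname{parting}(\mathcal{T},e)=(\mathcal{T}_u,\mathcal{T}_v)$ where $\mathcal{T}_u,\mathcal{T}_v$ are the induced partially directed subgraphs of $\mathcal{T}$ on the vertex sets of $T_u,T_v$, with the edge $e$ modified as follows: if $u\to v$ in $\mathcal{T}$ then $u\to v$ in $\mathcal{T}_v$ and $u-v$ in $\mathcal{T}_u$; if $v\to u$ in $\mathcal{T}$ then $v\to u$ in $\mathcal{T}_u$ and $u-v$ in $\mathcal{T}_v$; if $u-v$ in $\mathcal{T}$ then $u-v$ in both. The ideals $I_{T_u}\subseteq\mathbb{K}[x_{\mathcal{P}}:\mathcal{P}\in\mathrm{meq}(T_u)]$ and $I_{T_v}\subseteq\mathbb{K}[y_{\mathcal{P}}:\mathcal{P}\in\mathrm{meq}(T_v)]$. For $Q\subseteq R_1\times R_2$, $\phi_Q:\mathbb{K}[z_{(a,b)}:(a,b)\in Q]\to\mathbb{K}[x_a,y_b]$ is $z_{(a,b)}\mapsto x_ay_b$ and $I\times_QJ:=\phi_Q^{-1}(I+J)$. *)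

From HB Require Import structures.
From mathcomp Require Import all_boot all_order all_algebra.
From mathcomp Require Import mpoly.
From Stdlib Require List.

Unset Printing Implicit Defensive.

Import GRing.Theory.
Local Open Scope ring_scope.

(* A directed / partially directed graph is a set D of ordered pairs:        *)
(*   (i,j) \in D and (j,i) \notin D  encodes  i -> j,                        *)
(*   (i,j) \in D and (j,i) \in D     encodes  i - j   (undirected edge).     *)

Definition pgraph (p : nat) := {set 'I_p * 'I_p}.

Section Graphs.
Variable p : nat.
Implicit Types (G : rel 'I_p) (D P : pgraph p).

Definition simple_graph G := (forall i j, G i j = G j i) /\ (forall i, ~~ G i i).

Definition ug_acyclic G :=
  forall c : seq 'I_p, uniq c -> (2 < size c)%N -> ~~ cycle G c.

Definition is_tree G :=
  [/\ simple_graph G, (forall i j, connect G i j) & ug_acyclic G].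

Definition degree G i := #|[set j | G i j]|.
Definition is_leaf G i := degree G i == 1%N.
Definition nonleaf_edge G u v := [&& G u v, ~~ is_leaf G u & ~~ is_leaf G v].

Definition arc D i j := (i, j) \in D.
Definition adjD D i j := arc D i j || arc D j i.
Definition is_dag D :=
  [forall i, forall j, arc D i j ==> ~~ connect (arc D) j i].
Definition has_skeleton G D := [forall i, forall j, G i j == adjD D i j].
Definition pa D i : {set 'I_p} := [set j | arc D j i].

Definition in_vstruct D i j :=
  arc D i j && [exists k, [&& k != i, arc D k j & ~~ adjD D i k]].

(* pattern: undirect every edge not belonging to a v-structure *)
Definition pattern D : pgraph p :=
  [set x | arc D x.1 x.2 || (arc D x.2 x.1 && ~~ in_vstruct D x.2 x.1)].

Definition dags_with_skeleton G : {set pgraph p} :=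
  [set D | is_dag D && has_skeleton G D].

Definition meq G : {set pgraph p} := [set pattern D | D in dags_with_skeleton G].

Definition rep_dag (P : pgraph p) : pgraph p :=
  if [pick D | is_dag D && (pattern D == P)] is Some D then D else set0.

Definition cimset D (S : {set 'I_p}) : bool :=
  (1 < #|S|)%N && [exists i in S, (S :\ i) \subset pa D i].

Definition bigsets : {set {set 'I_p}} := [set S : {set 'I_p} | (1 < #|S|)%N].

End Graphs.

(* K[z_a : a in A] is {mpoly K[#|A|]}, the variable z_a being 'X_j where    *)
(* enum_val j = a.                                                           *)

Section Rings.
Variable K : fieldType.

(* the variable z_a of K[z_a : a in A], sent through an embedding of     *)
(* index sets emb : 'I_#|A| -> 'I_n (used for the identity and for the   *)
(* two halves of K[x_a, y_b]); 0 if a \notin A (never used so).          *)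
Definition var_in (T : finType) (A : {set T}) (n : nat)
    (emb : 'I_#|A| -> 'I_n) (a : T) : {mpoly K[n]} :=
  if [pick j : 'I_#|A| | enum_val j == a] is Some j then 'X_(emb j) else 0.

Definition zvar (T : finType) (A : {set T}) (a : T) : {mpoly K[#|A|]} :=
  var_in T A #|A| id a.

Definition subst (n m : nat) (h : 'I_n -> {mpoly K[m]}) (f : {mpoly K[n]})
  : {mpoly K[m]} := mmap (fun c : K => c%:MP) h f.

Definition ideal_gen (R : comNzRingType) (S : R -> Prop) (f : R) : Prop :=
  exists s : seq (R * R), (forall x, List.In x s -> S x.2) /\
                          f = \sum_(x <- s) x.1 * x.2.

Variable p : nat.

Definition psi (G : rel 'I_p) (f : {mpoly K[#|meq p G|]})
  : {mpoly K[#|bigsets p|]} :=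
  subst #|meq p G| #|bigsets p| (fun j => \prod_(S in bigsets p | cimset p (rep_dag p (enum_val j)) S)
                     zvar _ (bigsets p) S) f.

Definition imset_ideal (G : rel 'I_p) (f : {mpoly K[#|meq p G|]}) : Prop :=
  psi G f = 0.

Section FiberProduct.
Variables (T1 T2 : finType) (R1 : {set T1}) (R2 : {set T2}).
Variable Q : {set T1 * T2}.
Variable I : {mpoly K[#|R1|]} -> Prop.
Variable J : {mpoly K[#|R2|]} -> Prop.

Local Notation N := (#|R1| + #|R2|)%N.

Definition xvar (a : T1) : {mpoly K[N]} := var_in T1 R1 N (@lshift _ #|R2|) a.
Definition yvar (b : T2) : {mpoly K[N]} := var_in T2 R2 N (@rshift #|R1| _) b.

Definition embx (f : {mpoly K[#|R1|]}) : {mpoly K[N]} :=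
  subst _ _ (fun i => 'X_(lshift #|R2| i)) f.
Definition emby (f : {mpoly K[#|R2|]}) : {mpoly K[N]} :=
  subst _ _ (fun i => 'X_(rshift #|R1| i)) f.

Definition ideal_sum (f : {mpoly K[N]}) : Prop :=
  ideal_gen _ (fun g => (exists2 a, I a & g = embx a) \/ (exists2 b, J b & g = emby b)) f.

Definition phiQ (f : {mpoly K[#|Q|]}) : {mpoly K[N]} :=
  subst _ _ (fun j => xvar (enum_val j).1 * yvar (enum_val j).2) f.

Definition fiber_product (f : {mpoly K[#|Q|]}) : Prop := ideal_sum (phiQ f).
End FiberProduct.

End Rings.

(* T_u, T_v are modelled as graphs on the same vertex set [p] (vertices not  *)
(* in T_u, resp. T_v, being isolated).                         *)
Section Parting.
Variables (p : nat) (T : rel 'I_p) (u v : 'I_p).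

Definition is_e (a b : 'I_p) := ((a == u) && (b == v)) || ((a == v) && (b == u)).

Definition T_del : rel 'I_p := fun a b => T a b && ~~ is_e a b.

Definition comp_u : {set 'I_p} := [set x | connect T_del u x].
Definition comp_v : {set 'I_p} := [set x | connect T_del v x].

Definition T_u : rel 'I_p :=
  fun a b => [&& T_del a b, a \in comp_u & b \in comp_u] || is_e a b.
Definition T_v : rel 'I_p :=
  fun a b => [&& T_del a b, a \in comp_v & b \in comp_v] || is_e a b.

Definition Vu : {set 'I_p} := v |: comp_u.
Definition Vv : {set 'I_p} := u |: comp_v.

Definition part_u (P : pgraph p) : pgraph p :=
  [set x in P | (x.1 \in Vu) && (x.2 \in Vu)]
    :|: (if (u, v) \in P then [set (u, v); (v, u)] else set0).
Definition part_v (P : pgraph p) : pgraph p :=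
  [set x in P | (x.1 \in Vv) && (x.2 \in Vv)]
    :|: (if (v, u) \in P then [set (u, v); (v, u)] else set0).
Definition parting (P : pgraph p) : pgraph p * pgraph p := (part_u P, part_v P).

Definition Qpart : {set pgraph p * pgraph p} := [set parting P | P in meq p T].

End Parting.

Definition rename (K : fieldType) (p : nat) (T : rel 'I_p) (u v : 'I_p)
    (f : {mpoly K[#|meq p T|]}) : {mpoly K[#|Qpart p T u v|]} :=
  subst K _ _ (fun i => zvar K _ (Qpart p T u v) (parting p T u v (enum_val i))) f.

(* Write V_u, V_v for the vertex sets of T_u, T_v; they cover the tree and meet in
   {u, v}.  Because a tree is triangle-free, c_P(S) = 1 forces S into the closed
   neighbourhood of one vertex, hence into V_u or V_v, and c_P can be read off the
   pattern P; parting restricts it: c_{P_u}(S) = c_P(S) [S \subset V_u].  Thus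
   psi_T(z_P) is psi_{T_u}(x_{P_u}) psi_{T_v}(y_{P_v}) with the common factor t_{uv}
   counted once, so a ring map sending x_a, y_b to these factors composes with phi_Q
   to psi_T and kills I_{T_u} + I_{T_v}.  Conversely psi_T is a monomial map, so I_T
   is spanned by binomials z^a - z^b with equal images; under phi_Q such a binomial
   becomes x_A y_B - x_A' y_B' = y_B (x_A - x_A') + x_A' (y_B - y_B'), and the two
   differences lie in I_{T_u} and I_{T_v} because setting t_S = 1 for S not inside
   V_u (resp. V_v) turns psi_T into psi_{T_u} (resp. psi_{T_v}). *)

From HB Require Import structures.
From mathcomp Require Import all_boot all_order all_algebra.
From mathcomp Require Import mpoly.
From mathcomp Require Import zify ring.
From Pilot Require Import Defs.

Set Implicit Arguments.
Unset Strict Implicit.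

Lemma card_le_setD1 (T : finType) (A : {set T}) x : #|A| <= #|A :\ x|.+1.
Proof. by rewrite (cardsD1 x A) -add1n leq_add2r leq_b1. Qed.

(** * Characteristic imsets of triangle-free patterns *)

Section Graphs.
Variable p : nat.
Implicit Types (G : rel 'I_p) (D P : pgraph p) (S W : {set 'I_p}).

Definition triangle_free G := forall a b c, G a b -> G b c -> G a c -> False.

Definition nbr G i : {set 'I_p} := [set j | G i j].
Lemma in_nbr G i j : (j \in nbr G i) = G i j. Proof. by rewrite inE. Qed.

Definition dpa P i : {set 'I_p} := [set j | ((j, i) \in P) && ((i, j) \notin P)].
Lemma in_dpa P i j : (j \in dpa P i) = ((j, i) \in P) && ((i, j) \notin P).
Proof. by rewrite inE. Qed.

Definition cim_parents G P S i : {set 'I_p} :=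
  if #|S| == 2 then nbr G i else dpa P i.

(* The characteristic imset of the Markov class of [P], valid when the skeleton [G]
   is triangle-free (lemma [cimset_pattern]). *)
Definition pattern_cimset G P S : bool :=
  (1 < #|S|) && [exists i in S, S :\ i \subset cim_parents G P S i].

Lemma simple_edge_neq G a b : simple_graph p G -> G a b -> a != b.
Proof. by case=> _ irr; apply: contraTneq => ->; apply: irr. Qed.

Lemma acyclic_triangle_free G : simple_graph p G -> ug_acyclic p G -> triangle_free G.
Proof.
move=> sG acG a b c ab bc ac; move: (acG [:: a; b; c]).
have [Gsym _] := sG; rewrite /= !inE negb_or.
rewrite (simple_edge_neq sG ab) (simple_edge_neq sG ac) (simple_edge_neq sG bc).
by rewrite ab bc Gsym ac => /(_ isT isT).
Qed.

Lemma dag_arc_asym D i j : is_dag p D -> arc p D i j -> ~~ arc p D j i.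
Proof.
move=> /forallP /(_ i) /forallP /(_ j) /implyP dagD ij.
by apply: contra (dagD ij) => /connect1.
Qed.

Lemma skeletonE G D i j : has_skeleton p G D -> G i j = adjD p D i j.
Proof. by move=> /forallP /(_ i) /forallP /(_ j) /eqP. Qed.

Lemma pa_sub_nbr G D i : has_skeleton p G D -> pa p D i \subset nbr G i.
Proof.
by move=> sk; apply/subsetP => j; rewrite !inE (skeletonE _ _ sk) /adjD => ->; rewrite orbT.
Qed.

Lemma arc_pattern D a b :
  arc p (pattern p D) a b = arc p D a b || (arc p D b a && ~~ in_vstruct p D b a).
Proof. by rewrite /arc inE. Qed.

Lemma dpa_pattern_sub D i : dpa (pattern p D) i \subset pa p D i.
Proof.
apply/subsetP => j; rewrite !inE /= => /andP [].
by case/orP => [//|/andP [-> _]].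
Qed.

Lemma adjD_pattern D a b : adjD p (pattern p D) a b = adjD p D a b.
Proof.
rewrite /adjD !arc_pattern.
by case: (arc p D a b); case: (arc p D b a); rewrite ?orbT.
Qed.

Lemma vstruct_parent_dpa G D i j k :
    triangle_free G -> is_dag p D -> has_skeleton p G D ->
    k != j -> j \in pa p D i -> k \in pa p D i -> j \in dpa (pattern p D) i.
Proof.
move=> tf dD sk kj; rewrite !inE => ji ki.
have jk : ~~ adjD p D j k.
  apply/negP => jk; apply: (tf j i k); rewrite (skeletonE _ _ sk) //.
    by rewrite /adjD ji.
  by rewrite /adjD ki orbT.
rewrite ji (negbTE (dag_arc_asym dD ji)) /= negbK.
by apply/andP; split=> //; apply/existsP; exists k; rewrite kj ki.
Qed.

Lemma exists_pair_sub (X : 'I_p -> {set 'I_p}) a b : a != b ->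
  [exists i in [set a; b], [set a; b] :\ i \subset X i] = (b \in X a) || (a \in X b).
Proof.
move=> ab; have Da : [set a; b] :\ a = [set b] by rewrite setU1K // inE.
have Db : [set a; b] :\ b = [set a] by rewrite setUC setU1K // inE eq_sym.
apply/exists_inP/orP => [[i] | [bX | aX]].
- by rewrite !inE => /orP [] /eqP ->; rewrite ?Da ?Db sub1set; [left | right].
- by exists a; rewrite ?Da ?sub1set // !inE eqxx.
- by exists b; rewrite ?Db ?sub1set // !inE eqxx orbT.
Qed.

Lemma cimset_pattern G D S :
    simple_graph p G -> triangle_free G -> is_dag p D -> has_skeleton p G D ->
  cimset p D S = pattern_cimset G (pattern p D) S.
Proof.
move=> [Gsym _] tf dD sk; rewrite /cimset /pattern_cimset /cim_parents.
case: ltnP => //= S2.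
case S3: (#|S| == 2).
  move/cards2P: S3 => [a [b [ab ->]]].
  rewrite !exists_pair_sub // !inE (Gsym b) (skeletonE _ _ sk) /adjD.
  by case: (arc p D a b); case: (arc p D b a).
apply/exists_inP/exists_inP => /= -[i iS sub]; exists i => //; last first.
  exact: subset_trans sub (dpa_pattern_sub D i).
apply/subsetP => j jSi; have [k kSij] : exists k, k \in S :\ i :\ j.
  apply/set0Pn; rewrite -card_gt0; move: S2 S3.
  by rewrite (cardsD1 i S) (cardsD1 j (S :\ i)) iS jSi; lia.
move: (kSij); rewrite 2!inE => /andP [kj kSi].
by apply: (vstruct_parent_dpa tf dD sk kj); apply: (subsetP sub).
Qed.

Lemma rep_dagP G P : P \in meq p G ->
  [/\ is_dag p (rep_dag p P), has_skeleton p G (rep_dag p P) & pattern p (rep_dag p P) = P].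
Proof.
case/imsetP => D; rewrite inE => /andP [dD sD] ->; rewrite /rep_dag.
case: pickP => [D' /andP [dD' /eqP eD'] | /(_ D)]; last by rewrite dD eqxx.
split=> //; apply/forallP => i; apply/forallP => j.
by rewrite -adjD_pattern eD' adjD_pattern -(skeletonE _ _ sD).
Qed.

Lemma cimset_rep_dag G P S : simple_graph p G -> triangle_free G -> P \in meq p G ->
  cimset p (rep_dag p P) S = pattern_cimset G P S.
Proof. by move=> sG tG /rep_dagP [dD sD eP]; rewrite (cimset_pattern _ sG tG dD sD) eP. Qed.

Lemma pattern_edge G D a b : has_skeleton p G D -> (a, b) \in pattern p D -> G a b.
Proof. by move=> sD ab; rewrite (skeletonE _ _ sD) -adjD_pattern /adjD [arc _ _ a b]ab. Qed.

Lemma meq_edge G P a b : P \in meq p G -> (a, b) \in P -> G a b.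
Proof. by case/imsetP => D; rewrite inE => /andP [_ sD] ->; apply: pattern_edge. Qed.

Lemma dpa_sub_nbr G P i : P \in meq p G -> dpa P i \subset nbr G i.
Proof.
case/imsetP => D; rewrite inE => /andP [_ sD] ->.
exact: subset_trans (dpa_pattern_sub D i) (pa_sub_nbr i sD).
Qed.

Lemma cim_parents_sub_nbr G P S i : P \in meq p G -> cim_parents G P S i \subset nbr G i.
Proof. by rewrite /cim_parents; case: ifP => // _; apply: dpa_sub_nbr. Qed.

Lemma pattern_cimset_star G P S : P \in meq p G -> pattern_cimset G P S ->
  exists i, S \subset i |: nbr G i.
Proof.
move=> PG /andP [_ /exists_inP [i iS sub]]; exists i.
by rewrite -(setD1K iS) setUS // (subset_trans sub (cim_parents_sub_nbr S i PG)).
Qed.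

Lemma eq_pattern_cimset G G' P S : G =2 G' -> pattern_cimset G P S = pattern_cimset G' P S.
Proof.
move=> eG; rewrite /pattern_cimset /cim_parents; congr (_ && _); apply: eq_existsb => i.
by rewrite (_ : nbr G i = nbr G' i) //; apply/setP => j; rewrite !in_nbr eG.
Qed.

Lemma eq_meq G G' : G =2 G' -> meq p G = meq p G'.
Proof.
move=> eG; rewrite /meq; suff -> : dags_with_skeleton p G = dags_with_skeleton p G' by [].
apply/setP => D; rewrite !inE /has_skeleton.
by under eq_forallb => i do under eq_forallb => j do rewrite eG.
Qed.

Definition induced D (W : {set 'I_p}) : pgraph p :=
  [set x in D | (x.1 \in W) && (x.2 \in W)].

Lemma arc_induced D W a b : arc p (induced D W) a b = [&& arc p D a b, a \in W & b \in W].
Proof. by rewrite /arc inE. Qed.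

Lemma induced_dag D W : is_dag p D -> is_dag p (induced D W).
Proof.
move=> dD; apply/forallP => i; apply/forallP => j; apply/implyP.
rewrite arc_induced => /and3P [ij _ _].
move: dD => /forallP /(_ i) /forallP /(_ j) /implyP /(_ ij); apply: contra.
by apply: connect_sub => x y; rewrite arc_induced => /andP [/connect1 ? _].
Qed.

Lemma adjD_induced D W a b : a \in W -> b \in W -> adjD p (induced D W) a b = adjD p D a b.
Proof. by move=> aW bW; rewrite /adjD !arc_induced aW bW !andbT. Qed.

Lemma arc_pattern_induced D W a b : a \in W -> b \in W -> pa p D a \subset W ->
  arc p (pattern p (induced D W)) a b = arc p (pattern p D) a b.
Proof.
move=> aW bW paW; rewrite !arc_pattern !arc_induced aW bW !andbT; congr (_ || (_ && ~~ _)).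
rewrite /in_vstruct arc_induced aW bW !andbT; congr (_ && _); apply: eq_existsb => k.
case ka: (arc p D k a); last by rewrite arc_induced ka andbF.
have kW : k \in W by apply: (subsetP paW); rewrite inE.
by rewrite arc_induced ka kW aW adjD_induced.
Qed.

End Graphs.

(** * Splitting a tree along an edge *)

Section TreeSplitOneSide.
Variables (p : nat) (T : rel 'I_p) (u v : 'I_p).
Hypotheses (T_tree : is_tree p T) (Tuv : T u v).

Local Notation comp_u := (comp_u p T u v).
Local Notation Vu := (Vu p T u v).

Let T_sym i j : T i j = T j i. Proof. by case: T_tree => -[]. Qed.

Lemma tree_edge_neq : u != v.
Proof. by case: T_tree => sT _ _; apply: simple_edge_neq sT Tuv. Qed.

Lemma is_e_sym a b : is_e p u v a b = is_e p u v b a.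
Proof. by rewrite /is_e orbC [(b == u) && _]andbC [(b == v) && _]andbC. Qed.

Lemma is_e_edge a b : is_e p u v a b -> T a b.
Proof. by case/orP => /andP [/eqP -> /eqP ->]; rewrite // T_sym. Qed.

Lemma not_connect_del_uv : ~~ connect (T_del p T u v) u v.
Proof.
apply/negP => /connectP [q0 path_q0 last_q].
case: (shortenP path_q0) last_q => q path_q uniq_q _ last_q.
have path_T : path T u q by apply: sub_path path_q => a b /andP [].
have cycle_q : cycle T (u :: q) by rewrite /= rcons_path path_T -last_q T_sym.
have size_q : 2 < size (u :: q).
  case: q path_q last_q {uniq_q path_T cycle_q} => [|a [|b q]] //=.
    by move=> _ uv; move: tree_edge_neq; rewrite -uv eqxx.
  by move=> /andP [/andP [_ not_e] _] va; move: not_e; rewrite -va /is_e !eqxx.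
by case: T_tree => _ _ /(_ _ uniq_q size_q); rewrite cycle_q.
Qed.

Lemma u_in_Vu : u \in Vu. Proof. by rewrite !inE connect0 orbT. Qed.
Lemma v_in_Vu : v \in Vu. Proof. by rewrite !inE eqxx. Qed.
Lemma v_notin_comp_u : v \notin comp_u. Proof. by rewrite inE not_connect_del_uv. Qed.

Lemma comp_u_step x y : x \in comp_u -> T x y -> (y \in comp_u) || is_e p u v x y.
Proof.
rewrite !inE => ux xy; case exy: (is_e p u v x y); rewrite ?orbT // orbF.
by apply: connect_trans ux (connect1 _); rewrite /T_del xy exy.
Qed.

Lemma comp_u_nbr x y : x \in comp_u -> T x y -> y \in Vu.
Proof.
move=> ux /(comp_u_step ux) /orP [uy | /orP [] /andP [_ /eqP ->]].
- by rewrite inE uy orbT.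
- exact: v_in_Vu.
- exact: u_in_Vu.
Qed.

Lemma Vu_nbr_v y : T v y -> y \in Vu -> y = u.
Proof.
move=> vy; rewrite in_setU1 => /orP [/eqP yv | uy].
  by case: T_tree => -[_ irr] _ _; move: vy; rewrite yv (negbTE (irr v)).
have yv : T y v by rewrite T_sym.
move: (comp_u_step uy yv); rewrite (negbTE v_notin_comp_u) /=.
by case/orP=> /andP [/eqP -> /eqP uv] //; move: tree_edge_neq; rewrite uv eqxx.
Qed.

Lemma Vu_edge_comp_u a b : a \in Vu -> T a b -> b \in Vu -> ~~ is_e p u v a b -> a \in comp_u.
Proof.
rewrite in_setU1 => /orP [/eqP -> vb /(Vu_nbr_v vb) -> | //].
by rewrite /is_e !eqxx orbT.
Qed.

Lemma T_uE a b : T_u p T u v a b = [&& T a b, a \in Vu & b \in Vu].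
Proof.
apply/idP/idP => [/orP [/and3P [/andP [ab _] ua ub] | eab] | /and3P [ab aV bV]].
- by rewrite ab !in_setU1 ua ub !orbT.
- rewrite is_e_edge //; case/orP: eab => /andP [/eqP -> /eqP ->];
  by rewrite u_in_Vu v_in_Vu.
rewrite /T_u; case eab: (is_e p u v a b); rewrite ?orbT // orbF.
have ba : T b a by rewrite T_sym.
rewrite /T_del ab eab (Vu_edge_comp_u aV ab bV) ?eab //.
by rewrite (Vu_edge_comp_u bV ba aV) // is_e_sym eab.
Qed.

End TreeSplitOneSide.

Section SwapEnds.
Variables (p : nat) (T : rel 'I_p) (u v : 'I_p).

Lemma is_e_swap : is_e p v u =2 is_e p u v.
Proof. by move=> a b; rewrite /is_e orbC. Qed.

Lemma T_del_swap : T_del p T v u =2 T_del p T u v.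
Proof. by move=> a b; rewrite /T_del is_e_swap. Qed.

Lemma comp_u_swap : comp_u p T v u = comp_v p T u v.
Proof. by apply/setP => x; rewrite !inE (eq_connect T_del_swap). Qed.

Lemma Vu_swap : Vu p T v u = Vv p T u v.
Proof. by rewrite /Vu comp_u_swap. Qed.

Lemma T_u_swap : T_u p T v u =2 T_v p T u v.
Proof. by move=> a b; rewrite /T_u /T_v T_del_swap comp_u_swap is_e_swap. Qed.

Lemma part_u_swap P : part_u p T v u P = part_v p T u v P.
Proof. by rewrite /part_u /part_v Vu_swap [[set (v, u); (u, v)]]setUC. Qed.

End SwapEnds.

Section TreeSplit.
Variables (p : nat) (T : rel 'I_p) (u v : 'I_p).
Hypotheses (T_tree : is_tree p T) (Tuv : T u v).

Local Notation comp_u := (comp_u p T u v).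
Local Notation comp_v := (comp_v p T u v).
Local Notation Vu := (Vu p T u v).
Local Notation Vv := (Vv p T u v).

Let T_sym i j : T i j = T j i. Proof. by case: T_tree => -[]. Qed.
Let Tvu : T v u. Proof. by rewrite T_sym. Qed.

Lemma comp_v_nbr x y : x \in comp_v -> T x y -> y \in Vv.
Proof. rewrite -comp_u_swap -Vu_swap; exact: comp_u_nbr. Qed.

Lemma comp_cover x : x \in comp_u :|: comp_v.
Proof.
have Vu_C : Vu \subset comp_u :|: comp_v.
  by rewrite subUset subsetUl sub1set in_setU [v \in comp_v]inE connect0 orbT.
have Vv_C : Vv \subset comp_u :|: comp_v.
  by rewrite subUset subsetUr sub1set in_setU [u \in comp_u]inE connect0.
have step y z : y \in comp_u :|: comp_v -> T y z -> z \in comp_u :|: comp_v.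
  rewrite in_setU => /orP [/comp_u_nbr yz /yz | /comp_v_nbr yz /yz].
    exact: (subsetP Vu_C).
  exact: (subsetP Vv_C).
have C_closed : closed T (mem (comp_u :|: comp_v)).
  by move=> y z yz; apply/idP/idP => /step; apply; rewrite // T_sym.
case: T_tree => _ conn _; rewrite -(closed_connect C_closed (conn u x)).
by rewrite in_setU inE connect0.
Qed.

Lemma Vu_Vv_endpoints x : x \in Vu -> x \in Vv -> (x == u) || (x == v).
Proof.
rewrite !in_setU1 => /orP [-> | ux]; rewrite ?orbT // => /orP [-> // | vx].
case/negP: (not_connect_del_uv T_tree Tuv); move: ux vx; rewrite !inE => ux vx.
have del_sym : ssrbool.symmetric (T_del p T u v).
  by move=> a b; rewrite /T_del is_e_sym T_sym.
by apply: connect_trans ux _; rewrite (sym_connect_sym del_sym).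
Qed.

Lemma closed_nbr_split i : (i |: nbr T i \subset Vu) || (i |: nbr T i \subset Vv).
Proof.
rewrite !subUset !sub1set !in_setU1.
case/setUP: (comp_cover i) => ci; rewrite ci ?orbT /=; apply/orP; [left | right];
  apply/subsetP => j; rewrite in_nbr; [exact: comp_u_nbr | exact: comp_v_nbr].
Qed.

End TreeSplit.

(** * Parting patterns along the edge *)

Section PartingOneSide.
Variables (p : nat) (T : rel 'I_p) (u v : 'I_p).
Hypotheses (T_tree : is_tree p T) (Tuv : T u v).
Implicit Types (P : pgraph p) (S : {set 'I_p}).

Local Notation Vu := (Vu p T u v).
Local Notation Tu := (T_u p T u v).
Local Notation part_u := (part_u p T u v).

Let T_sym i j : T i j = T j i. Proof. by case: T_tree => -[]. Qed.
Let Tvu : T v u. Proof. by rewrite T_sym. Qed.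

Lemma T_u_simple : simple_graph p Tu.
Proof.
have [[_ T_irr] _ _] := T_tree; split=> [a b | a]; rewrite !(T_uE T_tree Tuv).
  by rewrite T_sym [(a \in Vu) && _]andbC.
by rewrite (negbTE (T_irr a)).
Qed.

Lemma T_u_triangle_free : triangle_free Tu.
Proof.
move=> a b c; rewrite !(T_uE T_tree Tuv) => /andP [ab _] /andP [bc _] /andP [ac _].
by have [sT _ acT] := T_tree; apply: (acyclic_triangle_free sT acT ab bc ac).
Qed.

Lemma in_part_u P a b : ((a, b) \in part_u P) =
  [&& (a, b) \in P, a \in Vu & b \in Vu] ||
  ((u, v) \in P) && ((a == u) && (b == v) || (a == v) && (b == u)).
Proof. by rewrite /Defs.part_u in_setU inE; case: ((u, v) \in P); rewrite ?inE ?xpair_eqE. Qed.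

Lemma part_u_sub P a b : (a, b) \in part_u P -> (a \in Vu) && (b \in Vu).
Proof.
rewrite in_part_u => /orP [/and3P [_ -> ->] // | /andP [_]].
by case/orP => /andP [/eqP -> /eqP ->]; rewrite u_in_Vu v_in_Vu.
Qed.

Lemma part_u_mem P a b : a \in Vu -> b \in Vu -> (a, b) != (v, u) ->
  ((a, b) \in part_u P) = ((a, b) \in P).
Proof.
move=> aV bV; rewrite in_part_u aV bV !andbT xpair_eqE => /negbTE ->; rewrite orbF.
by case: eqP => [-> | _]; case: eqP => [-> | _]; rewrite ?andbT ?orbb ?andbF ?orbF.
Qed.

Lemma part_u_vu P : ((v, u) \in part_u P) = ((v, u) \in P) || ((u, v) \in P).
Proof. by rewrite in_part_u v_in_Vu u_in_Vu !eqxx !andbT orbT andbT. Qed.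

Section InducedDag.
Variable D : pgraph p.
Hypothesis sD : has_skeleton p T D.

Local Notation Du := (induced D Vu).

Lemma induced_skeleton : has_skeleton p Tu Du.
Proof.
apply/forallP => i; apply/forallP => j; apply/eqP.
rewrite (T_uE T_tree Tuv) (skeletonE _ _ sD) /adjD !arc_induced.
by case: (i \in Vu); case: (j \in Vu); rewrite ?andbF ?andbT.
Qed.

Lemma vstruct_induced_v a : in_vstruct p Du a v = false.
Proof.
apply/negP => /andP [+ /existsP [k /and3P [ka + _]]].
rewrite !arc_induced => /and3P [av aV _] /and3P [kv kV _].
have nbr_v w : arc p D w v -> w \in Vu -> w = u.
  by move=> wv; apply: Vu_nbr_v; rewrite // (skeletonE _ _ sD) /adjD wv orbT.
by move: ka; rewrite (nbr_v a av aV) (nbr_v k kv kV) eqxx.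
Qed.

Lemma pattern_induced : pattern p Du = part_u (pattern p D).
Proof.
apply/setP => -[a b].
have [/andP [aV bV] | abV] := boolP ((a \in Vu) && (b \in Vu)); last first.
  apply/idP/idP => [/(pattern_edge induced_skeleton) | /part_u_sub];
  by rewrite ?(T_uE T_tree Tuv) (negbTE abV) ?andbF.
have [[-> ->] | ne] := eqVneq (a, b) (v, u).
  rewrite part_u_vu -[_ || _]/(adjD p (pattern p D) v u) adjD_pattern -(skeletonE _ _ sD) Tvu.
  rewrite -[_ \in _]/(arc p _ v u) arc_pattern vstruct_induced_v andbT.
  rewrite -/(adjD p Du v u) -(skeletonE _ _ induced_skeleton).
  by rewrite (T_uE T_tree Tuv) Tvu u_in_Vu v_in_Vu.
rewrite part_u_mem //; have [ea | av] := eqVneq a v.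
  subst a.
  have not_vb G D' : has_skeleton p G D' -> (G v b -> T v b) -> (v, b) \notin pattern p D'.
    move=> sD' GT; apply: contra ne => /(pattern_edge sD') /GT vb.
    by rewrite (Vu_nbr_v T_tree Tuv vb bV).
  rewrite (negbTE (not_vb _ _ sD _)) // (negbTE (not_vb _ _ induced_skeleton _)) //.
  by rewrite (T_uE T_tree Tuv) => /andP [].
have aU : a \in comp_u p T u v by move: aV; rewrite in_setU1 (negbTE av).
apply: arc_pattern_induced => //; apply/subsetP => w /(subsetP (pa_sub_nbr a sD)).
by rewrite in_nbr; apply: comp_u_nbr.
Qed.

End InducedDag.

Lemma part_u_meq P : P \in meq p T -> part_u P \in meq p Tu.
Proof.
case/imsetP => D; rewrite inE => /andP [dD sD] ->.
by rewrite -pattern_induced //; apply: imset_f; rewrite inE induced_dag // induced_skeleton.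
Qed.

Lemma dpa_part_u P i : i \in Vu -> i != v -> dpa (part_u P) i = dpa P i :&: Vu.
Proof.
move=> iV iv; apply/setP => j; rewrite in_setI !in_dpa.
have [jV | jV] := boolP (j \in Vu); last first.
  by rewrite andbF; apply/negbTE; apply: contra jV => /andP [/part_u_sub /andP []].
rewrite andbT (part_u_mem _ iV jV) ?xpair_eqE ?(negbTE iv) //.
have [[-> ->] | ne] := eqVneq (j, i) (v, u); last by rewrite part_u_mem.
by rewrite part_u_vu; case: ((u, v) \in P); rewrite ?andbF ?orbF.
Qed.

Lemma nbr_T_u i : i \in Vu -> nbr Tu i = nbr T i :&: Vu.
Proof. by move=> iV; apply/setP => j; rewrite in_setI !in_nbr (T_uE T_tree Tuv) iV. Qed.

Lemma cim_parents_part_u P S i : i \in Vu -> (i != v) || (#|S| == 2) ->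
  cim_parents Tu (part_u P) S i = cim_parents T P S i :&: Vu.
Proof.
rewrite /cim_parents => iV; case: ifP => _; rewrite ?orbF => iv; first exact: nbr_T_u.
exact: dpa_part_u.
Qed.

Lemma card_sub_nbr_v S : S :\ v \subset nbr T v :&: Vu -> #|S| <= 2.
Proof.
move=> Snbr; apply: leq_trans (card_le_setD1 S v) _; rewrite ltnS -(cards1 u).
apply/subset_leq_card/(subset_trans Snbr)/subsetP => w.
by rewrite in_setI in_nbr in_set1 => /andP [vw /(Vu_nbr_v T_tree Tuv vw) ->].
Qed.

(* The boundary vertex [v] has a single neighbour [u] in [T_u], so it can only serve
   as the vertex [i] of [pattern_cimset] for two-element sets. *)
Lemma sub_cim_parents_part_u P S i : P \in meq p T -> 1 < #|S| -> i \in S ->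
  (S :\ i \subset cim_parents Tu (part_u P) S i) =
  (S :\ i \subset cim_parents T P S i) && (S \subset Vu).
Proof.
move=> PT S2 iS; have [j jSi] : exists j, j \in S :\ i.
  by apply/set0Pn; rewrite -card_gt0; move: S2; rewrite (cardsD1 i S) iS; lia.
have Tu_Vu w : w \in nbr Tu i -> (i \in Vu) && (w \in Vu).
  by rewrite in_nbr (T_uE T_tree Tuv) => /and3P [_ -> ->].
have not_v_S3 : #|S| != 2 -> S :\ v \subset nbr T v :&: Vu -> False.
  by move=> S3 /card_sub_nbr_v S_le2; case/negP: S3; rewrite eqn_leq S_le2.
apply/idP/andP => [SY | [SX SV]].
  have SYu := subset_trans SY (cim_parents_sub_nbr S i (part_u_meq PT)).
  have /andP [iV _] := Tu_Vu j (subsetP SYu j jSi).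
  have SV : S \subset Vu.
    rewrite -(setD1K iS) subUset sub1set iV; apply/subsetP => w /(subsetP SYu).
    by case/Tu_Vu/andP.
  have [ok | ] := boolP ((i != v) || (#|S| == 2)).
    by move: SY; rewrite cim_parents_part_u // subsetI => /andP [SX _].
  rewrite negb_or negbK => /andP [/eqP iv S3]; subst i; case: (not_v_S3 S3).
  by rewrite -nbr_T_u.
have iV : i \in Vu by apply: (subsetP SV).
have SiV : S :\ i \subset Vu by apply: subset_trans (subD1set S i) SV.
have [ok | ] := boolP ((i != v) || (#|S| == 2)).
  by rewrite cim_parents_part_u // subsetI SX.
rewrite negb_or negbK => /andP [/eqP iv S3]; subst i; case: (not_v_S3 S3).
by rewrite subsetI SiV andbT (subset_trans SX) // cim_parents_sub_nbr.
Qed.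

Lemma pattern_cimset_part_u P S : P \in meq p T ->
  pattern_cimset Tu (part_u P) S = pattern_cimset T P S && (S \subset Vu).
Proof.
move=> PT; rewrite /pattern_cimset; case: ltnP => //= S2.
apply/exists_inP/andP => [[i iS] | [/exists_inP [i iS SX] SV]].
  rewrite sub_cim_parents_part_u // => /andP [SX SV].
  by split=> //; apply/exists_inP; exists i.
by exists i; rewrite // sub_cim_parents_part_u // SX.
Qed.

End PartingOneSide.

Section Parting.
Variables (p : nat) (T : rel 'I_p) (u v : 'I_p).
Hypotheses (T_tree : is_tree p T) (Tuv : T u v).
Implicit Types (P : pgraph p) (S : {set 'I_p}).

Local Notation Vu := (Vu p T u v).
Local Notation Vv := (Vv p T u v).
Local Notation part_u := (part_u p T u v).
Local Notation part_v := (part_v p T u v).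

Let Tvu : T v u. Proof. by case: T_tree => -[<-]. Qed.

Lemma T_v_simple : simple_graph p (T_v p T u v).
Proof.
have [Tvu_sym Tvu_irr] := T_u_simple T_tree Tvu.
by split=> [a b | a]; rewrite -!T_u_swap; [apply: Tvu_sym | apply: Tvu_irr].
Qed.

Lemma T_v_triangle_free : triangle_free (T_v p T u v).
Proof. by move=> a b c; rewrite -!T_u_swap; apply: T_u_triangle_free. Qed.

Lemma part_v_meq P : P \in meq p T -> part_v P \in meq p (T_v p T u v).
Proof. by move=> PT; rewrite -part_u_swap -(eq_meq (T_u_swap T u v)) part_u_meq. Qed.

Lemma pattern_cimset_part_v P S : P \in meq p T ->
  pattern_cimset (T_v p T u v) (part_v P) S = pattern_cimset T P S && (S \subset Vv).
Proof.
move=> PT; rewrite -part_u_swap -Vu_swap -(eq_pattern_cimset _ _ (T_u_swap T u v)).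
exact: pattern_cimset_part_u.
Qed.

Lemma part_v_mem P a b : a \in Vv -> b \in Vv -> (a, b) != (u, v) ->
  ((a, b) \in part_v P) = ((a, b) \in P).
Proof. rewrite -part_u_swap -Vu_swap; exact: part_u_mem. Qed.

Lemma pattern_cimset_cover P S : P \in meq p T -> pattern_cimset T P S ->
  (S \subset Vu) || (S \subset Vv).
Proof.
move=> PT /(pattern_cimset_star PT) [i Si].
by case/orP: (closed_nbr_split u v T_tree i) => sub; rewrite (subset_trans Si sub) ?orbT.
Qed.

Lemma sub_Vu_Vv S : 1 < #|S| -> S \subset Vu -> S \subset Vv -> S = [set u; v].
Proof.
move=> S2 SVu SVv; apply/eqP; rewrite eqEcard cards2 (tree_edge_neq T_tree Tuv) S2 andbT.
apply/subsetP => x xS; rewrite !inE.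
exact: (Vu_Vv_endpoints T_tree Tuv (subsetP SVu x xS) (subsetP SVv x xS)).
Qed.

Lemma parting_inj : {in meq p T &, injective (parting p T u v)}.
Proof.
move=> P1 P2 P1T P2T [eu ev]; apply/setP => -[a b].
have [ab | nab] := boolP (T a b); last first.
  by rewrite (negbTE (contra (meq_edge P1T) nab)) (negbTE (contra (meq_edge P2T) nab)).
have mem_u x y : x \in Vu -> y \in Vu -> (x, y) != (v, u) ->
    ((x, y) \in P1) = ((x, y) \in P2).
  by move=> xV yV ne; rewrite -(part_u_mem P1 xV yV ne) -(part_u_mem P2 xV yV ne) eu.
have mem_v x y : x \in Vv -> y \in Vv -> (x, y) != (u, v) ->
    ((x, y) \in P1) = ((x, y) \in P2).
  by move=> xV yV ne; rewrite -(part_v_mem P1 xV yV ne) -(part_v_mem P2 xV yV ne) ev.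
have uv_vu : (u, v) != (v, u) by rewrite xpair_eqE negb_and (tree_edge_neq T_tree Tuv).
have Nab (W : {set 'I_p}) : a |: nbr T a \subset W -> (a \in W) && (b \in W).
  by move/subsetP => Na; rewrite !Na // in_setU1 ?eqxx // in_nbr ab orbT.
case/orP: (closed_nbr_split u v T_tree a) => /Nab /andP [aW bW].
- have [[-> ->] | ne] := eqVneq (a, b) (v, u); last exact: mem_u.
  by apply: mem_v; rewrite -?Vu_swap ?u_in_Vu ?v_in_Vu // eq_sym.
- have [[-> ->] | ne] := eqVneq (a, b) (u, v); last exact: mem_v.
  by apply: mem_u; rewrite ?u_in_Vu ?v_in_Vu.
Qed.

End Parting.

(** * Substitutions, ideals and monomial maps *)

Import GRing.Theory.
Local Open Scope ring_scope.

Section Substitution.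
Variables (K : fieldType) (n m : nat) (h : 'I_n -> {mpoly K[m]}).

HB.instance Definition _ :=
  GRing.RMorphism.copy (subst K n m h) (mmap (@mpolyC m K) h).

Lemma substX i : subst K n m h 'X_i = h i.
Proof. by rewrite /subst mmapX mmap1U. Qed.

Lemma subst_mpolyX mm : subst K n m h 'X_[mm] = \prod_(i < n) h i ^+ mm i.
Proof. by rewrite /subst mmapX. Qed.

Lemma substZ c f : subst K n m h (c *: f) = c *: subst K n m h f.
Proof. by rewrite /subst mmapZ mul_mpolyC. Qed.

End Substitution.

Lemma eq_subst (K : fieldType) n m (h h' : 'I_n -> {mpoly K[m]}) f :
  h =1 h' -> subst K n m h f = subst K n m h' f.
Proof.
move=> eh; rewrite [f]mpolyE !rmorph_sum; apply: eq_bigr => mm _.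
by rewrite /= !substZ !subst_mpolyX; congr (_ *: _); apply: eq_bigr => i _; rewrite eh.
Qed.

Lemma subst_comp (K : fieldType) n m k (h1 : 'I_n -> {mpoly K[m]}) (h2 : 'I_m -> {mpoly K[k]}) f :
  subst K m k h2 (subst K n m h1 f) = subst K n k (fun i => subst K m k h2 (h1 i)) f.
Proof.
rewrite [f]mpolyE [subst K n m h1 _]rmorph_sum.
rewrite [subst K m k h2 _]rmorph_sum [subst K n k _ _]rmorph_sum.
apply: eq_bigr => mm _.
rewrite /= !substZ !subst_mpolyX rmorph_prod; congr (_ *: _).
by apply: eq_bigr => i _; rewrite rmorphXn.
Qed.

Lemma sub_mul_mul (R : comNzRingType) (x x' y y' : R) :
  x * y - x' * y' = y * (x - x') + x' * (y - y').
Proof. by ring. Qed.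

Section IdealGen.
Variables (R : comNzRingType) (S : R -> Prop).

Lemma ideal_gen_ind (Q : R -> Prop) : Q 0 -> (forall a b, Q a -> Q b -> Q (a + b)) ->
  (forall c g, S g -> Q (c * g)) -> forall x, ideal_gen R S x -> Q x.
Proof.
move=> Q0 QD QM x [s [Ss ->]]; elim: s Ss => [|y s IHs] Ss; rewrite ?big_nil ?big_cons //.
by apply: QD; [apply: QM; apply: Ss; left | apply: IHs => z zs; apply: Ss; right].
Qed.

Lemma ideal_gen_base g : S g -> ideal_gen R S g.
Proof. by move=> Sg; exists [:: (1, g)]; rewrite big_seq1 mul1r; split=> // x [<- |]. Qed.

Lemma ideal_gen0 : ideal_gen R S 0.
Proof. by exists [::]; rewrite big_nil. Qed.

Lemma ideal_genD a b : ideal_gen R S a -> ideal_gen R S b -> ideal_gen R S (a + b).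
Proof.
move=> [s1 [S1 ->]] [s2 [S2 ->]]; exists (s1 ++ s2); rewrite big_cat; split=> // x.
by move=> /(List.in_app_or s1 s2 x) [/S1 | /S2].
Qed.

Lemma ideal_genMl c a : ideal_gen R S a -> ideal_gen R S (c * a).
Proof.
move=> [s [Ss ->]]; exists [seq (c * x.1, x.2) | x <- s]; split.
  by move=> x /List.in_map_iff [y [<- /Ss]].
by rewrite big_map mulr_sumr; apply: eq_bigr => x _; rewrite mulrA.
Qed.

Lemma ideal_gen_sum (I : Type) (r : seq I) (P : pred I) (F : I -> R) :
  (forall i, P i -> ideal_gen R S (F i)) -> ideal_gen R S (\sum_(i <- r | P i) F i).
Proof. by move=> IF; apply: big_ind IF; [apply: ideal_gen0 | apply: ideal_genD]. Qed.

End IdealGen.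

Lemma ideal_gen_rmorph (R R' : comNzRingType) (f : {rmorphism R -> R'}) S S' x :
  (forall g, S g -> ideal_gen R' S' (f g)) -> ideal_gen R S x -> ideal_gen R' S' (f x).
Proof.
move=> fS; apply: (ideal_gen_ind (Q := fun y => ideal_gen R' S' (f y))) => [|a b|c g Sg];
  rewrite ?rmorph0 ?rmorphD ?rmorphM.
- exact: ideal_gen0.
- exact: ideal_genD.
- exact/ideal_genMl/fS.
Qed.

Lemma rmorph_ideal_gen_eq0 (R R' : comNzRingType) (f : {rmorphism R -> R'}) S x :
  (forall g, S g -> f g = 0) -> ideal_gen R S x -> f x = 0.
Proof.
move=> fS; apply: (ideal_gen_ind (Q := fun y => f y = 0)) => [|a b|c g Sg];
  rewrite ?rmorph0 ?rmorphD ?rmorphM.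
- by [].
- by move=> -> ->; rewrite addr0.
- by rewrite (fS g Sg) mulr0.
Qed.

Section Monomials.
Variable K : fieldType.

Definition is_monomial n (q : {mpoly K[n]}) := exists mu, q = 'X_[mu].

Definition kernel_binomial n m (h : 'I_n -> {mpoly K[m]}) (g : {mpoly K[n]}) :=
  exists a b, subst K n m h 'X_[a] = subst K n m h 'X_[b] /\ g = 'X_[a] - 'X_[b].

Lemma mpolyX_inj n : injective (fun mu : 'X_{1..n} => 'X_[mu] : {mpoly K[n]}).
Proof.
move=> a b /(congr1 (mcoeff a)); rewrite /= !mcoeffX eqxx.
by case: eqP => // _ /eqP; rewrite oner_eq0.
Qed.

Lemma is_monomial_prod n (I : Type) (r : seq I) (P : pred I) (F : I -> {mpoly K[n]}) :
  (forall i, P i -> is_monomial (F i)) -> is_monomial (\prod_(i <- r | P i) F i).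
Proof.
move=> PF; apply: big_ind PF => [|_ _ [a ->] [b ->]]; first by exists 0%MM; rewrite mpolyX0.
by exists (a + b)%MM; rewrite mpolyXD.
Qed.

Lemma subst_monomial n m (h : 'I_n -> {mpoly K[m]}) mm :
  (forall i, is_monomial (h i)) -> is_monomial (subst K n m h 'X_[mm]).
Proof.
move=> hmon; rewrite subst_mpolyX; apply: is_monomial_prod => i _.
by have [a ->] := hmon i; exists (a *+ mm i)%MM; rewrite mpolyXn.
Qed.

Lemma mcoeff_subst_monomial n m (h : 'I_n -> {mpoly K[m]}) f mu :
  (forall i, is_monomial (h i)) ->
  (subst K n m h f)@_mu = \sum_(mm <- msupp f | subst K n m h 'X_[mm] == 'X_[mu]) f@_mm.
Proof.
move=> hmon; rewrite {1}[f]mpolyE [subst K n m h _]rmorph_sum raddf_sum [RHS]big_mkcond /=.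
apply: eq_bigr => mm _; rewrite substZ mcoeffZ.
have [mu' ->] := subst_monomial mm hmon; rewrite mcoeffX (inj_eq (@mpolyX_inj m)).
by case: eqP; rewrite ?mulr1 ?mulr0.
Qed.

(* Pick in each fibre of [mm |-> h(X^mm)] over the support of [f] a representative
   [r mm]; then [f] is the sum of the binomials [f_mm (X^mm - X^(r mm))], because
   the remaining sum has fibre sums of coefficients as coefficients. *)
Lemma monomial_kernel_binomial n m (h : 'I_n -> {mpoly K[m]}) f :
  (forall i, is_monomial (h i)) -> subst K n m h f = 0 ->
  ideal_gen _ (kernel_binomial h) f.
Proof.
move=> hmon hf; set s := msupp f; pose key mm := subst K n m h 'X_[mm].
pose r mm := nth 0%MM s (find (fun m' => key m' == key mm) s).
have r_spec mm : mm \in s -> r mm \in s /\ key (r mm) = key mm.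
  move=> mm_s; have has_mm : has (fun m' => key m' == key mm) s by apply/hasP; exists mm.
  by split; [rewrite mem_nth // -has_find | apply/eqP; exact: (nth_find 0%MM has_mm)].
have rest0 : \sum_(mm <- s) f@_mm *: 'X_[r mm] = 0.
  apply/mpolyP => mu; rewrite mcoeff0 raddf_sum /=.
  under eq_bigr do rewrite mcoeffZ mcoeffX.
  have [/andP [mu_s /eqP r_mu] | not_rep] := boolP ((mu \in s) && (r mu == mu)); last first.
    rewrite big1_seq // => mm /andP [_ mm_s]; case: eqP => [e | _]; last by rewrite mulr0.
    case/negP: not_rep; have [rs kr] := r_spec mm mm_s.
    by rewrite -e rs /= {1}/r kr.
  have [mu' e_mu] := subst_monomial mu hmon.
  transitivity ((subst K n m h f)@_mu'); last by rewrite hf mcoeff0.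
  rewrite mcoeff_subst_monomial // [RHS]big_mkcond /=.
  apply: eq_big_seq => mm mm_s; rewrite -e_mu -/(key mm) -/(key mu).
  have -> : (r mm == mu) = (key mm == key mu).
    apply/eqP/eqP => [<- | k]; first by have [_ ->] := r_spec mm mm_s.
    by rewrite -r_mu /r k.
  by case: eqP; rewrite ?mulr1 ?mulr0.
have -> : f = \sum_(mm <- s) f@_mm *: ('X_[mm] - 'X_[r mm]).
  by under eq_bigr do rewrite scalerBr; rewrite sumrB rest0 subr0 -mpolyE.
rewrite big_seq; apply: ideal_gen_sum => mm mm_s; rewrite -mul_mpolyC.
apply/ideal_genMl/ideal_gen_base; exists mm, (r mm); split=> //.
by have [_ kr] := r_spec mm mm_s; rewrite -/(key mm) -/(key (r mm)) kr.
Qed.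

End Monomials.

Section IndexedVariables.
Variables (K : fieldType) (X : finType) (A : {set X}).

Lemma var_in_enum_val n (emb : 'I_#|A| -> 'I_n) j : var_in K X A n emb (enum_val j) = 'X_(emb j).
Proof.
rewrite /var_in; case: pickP => [j' /eqP /enum_val_inj -> // | /(_ j)].
by rewrite eqxx.
Qed.

Lemma zvarE a (aA : a \in A) : zvar K X A a = 'X_(enum_rank_in aA a).
Proof. by rewrite /zvar -{1}(enum_rankK_in aA aA) var_in_enum_val. Qed.

Lemma subst_zvar m (F : X -> {mpoly K[m]}) a : a \in A ->
  subst K _ m (fun j => F (enum_val j)) (zvar K X A a) = F a.
Proof. by move=> aA; rewrite zvarE substX enum_rankK_in. Qed.

Lemma subst_zvar_var_in n (emb : 'I_#|A| -> 'I_n) a :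
  subst K _ n (fun j => 'X_(emb j)) (zvar K X A a) = var_in K X A n emb a.
Proof. by rewrite /zvar /var_in; case: pickP => [j _ | _]; rewrite ?substX ?rmorph0. Qed.

Definition restrict_vars (keep : pred X) (j : 'I_#|A|) : {mpoly K[#|A|]} :=
  if keep (enum_val j) then 'X_j else 1.

Lemma subst_restrict_vars_prod (c keep : pred X) :
  subst K _ _ (restrict_vars keep) (\prod_(a in A | c a) zvar K X A a) =
  \prod_(a in A | c a && keep a) zvar K X A a.
Proof.
pose F a := if keep a then zvar K X A a else 1.
rewrite (@eq_subst _ _ _ _ (fun j => F (enum_val j))) => [|j]; last first.
  by rewrite /restrict_vars /F /zvar var_in_enum_val.
rewrite rmorph_prod big_mkcond [RHS]big_mkcond /=; apply: eq_bigr => a _.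
by case aA: (a \in A); case: (c a); rewrite //= subst_zvar // /F; case: keep.
Qed.

End IndexedVariables.

Arguments restrict_vars K {X} A keep j.

(** * The characteristic imset ideal of the split tree *)

Definition imset_monomial (K : fieldType) p (P : pgraph p) : {mpoly K[#|bigsets p|]} :=
  \prod_(S in bigsets p | cimset p (rep_dag p P) S) zvar K _ (bigsets p) S.

Lemma psiE (K : fieldType) p (G : rel 'I_p) f :
  psi K p G f = subst K _ _ (fun j => imset_monomial K (enum_val j)) f.
Proof. by []. Qed.

Lemma imset_monomial_is_monomial (K : fieldType) p (P : pgraph p) :
  is_monomial (imset_monomial K P).
Proof.
apply: is_monomial_prod => S /andP [SB _].
by rewrite (zvarE _ SB); exists U_(enum_rank_in SB S)%MM.
Qed.

Section ImsetIdealSplitting.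
Variables (K : fieldType) (p : nat) (T : rel 'I_p) (u v : 'I_p).
Hypotheses (T_tree : is_tree p T) (Tuv : T u v).

Local Notation Vu := (Vu p T u v).
Local Notation Vv := (Vv p T u v).
Local Notation Tu := (T_u p T u v).
Local Notation Tv := (T_v p T u v).
Local Notation part_u := (part_u p T u v).
Local Notation part_v := (part_v p T u v).
Local Notation MT := (meq p T).
Local Notation Mu := (meq p Tu).
Local Notation Mv := (meq p Tv).
Local Notation B := (bigsets p).
Local Notation mono := (@imset_monomial K p).
Local Notation xvar := (xvar K _ _ Mu Mv).
Local Notation yvar := (yvar K _ _ Mu Mv).
Local Notation embx := (embx K _ _ Mu Mv).
Local Notation emby := (emby K _ _ Mu Mv).
Local Notation ISum := (ideal_sum K _ _ Mu Mv (imset_ideal K p Tu) (imset_ideal K p Tv)).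

Let T_simple : simple_graph p T. Proof. by case: T_tree. Qed.
Let T_triangle_free : triangle_free T.
Proof. by case: T_tree => sT _ acT; apply: acyclic_triangle_free. Qed.

Lemma cimset_part_u P S : P \in MT ->
  cimset p (rep_dag p (part_u P)) S = cimset p (rep_dag p P) S && (S \subset Vu).
Proof.
move=> PT; rewrite (cimset_rep_dag _ T_simple T_triangle_free PT).
rewrite (cimset_rep_dag _ (T_u_simple T_tree Tuv) (T_u_triangle_free T_tree Tuv)).
  exact: pattern_cimset_part_u.
exact: part_u_meq.
Qed.

Lemma cimset_part_v P S : P \in MT ->
  cimset p (rep_dag p (part_v P)) S = cimset p (rep_dag p P) S && (S \subset Vv).
Proof.
move=> PT; rewrite (cimset_rep_dag _ T_simple T_triangle_free PT).
rewrite (cimset_rep_dag _ (T_v_simple T_tree Tuv) (T_v_triangle_free T_tree Tuv)).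
  exact: pattern_cimset_part_v.
exact: part_v_meq.
Qed.

Local Notation keep_u := (restrict_vars K B (fun S => S \subset Vu)).
Local Notation keep_v := (restrict_vars K B (fun S => S \subset Vv)).
Local Notation drop_uv := (restrict_vars K B (fun S => S != [set u; v])).

Lemma imset_monomial_part_u P : P \in MT -> subst K _ _ keep_u (mono P) = mono (part_u P).
Proof.
by move=> PT; rewrite subst_restrict_vars_prod; apply: eq_bigl => S; rewrite cimset_part_u.
Qed.

Lemma imset_monomial_part_v P : P \in MT -> subst K _ _ keep_v (mono P) = mono (part_v P).
Proof.
by move=> PT; rewrite subst_restrict_vars_prod; apply: eq_bigl => S; rewrite cimset_part_v.
Qed.

Lemma imset_monomial_split P : P \in MT ->
  mono P = mono (part_u P) * subst K _ _ drop_uv (mono (part_v P)).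
Proof.
move=> PT; rewrite subst_restrict_vars_prod /imset_monomial !big_mkcondr -big_split /=.
apply: eq_bigr => S SB; rewrite cimset_part_u // cimset_part_v //.
case cS: (cimset _ _ S) => /=; last by rewrite mulr1.
have S2 : (1 < #|S|)%N by move: SB; rewrite inE.
have [Su | Su] := boolP (S \subset Vu); have [Sv | Sv] := boolP (S \subset Vv) => /=.
- by rewrite (sub_Vu_Vv T_tree Tuv S2 Su Sv) eqxx mulr1.
- by rewrite mulr1.
- rewrite mul1r; case: eqP => // eS; case/negP: Su; rewrite eS subUset !sub1set.
  by rewrite u_in_Vu v_in_Vu.
- move: cS; rewrite (cimset_rep_dag _ T_simple T_triangle_free PT).
  move=> /(pattern_cimset_cover u v T_tree PT).
  by rewrite (negbTE Su) (negbTE Sv).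
Qed.

Definition parting_map (g : {mpoly K[#|MT|]}) :=
  phiQ K _ _ Mu Mv (Qpart p T u v) (rename K p T u v g).

Lemma parting_mapE g : parting_map g =
  subst K _ _ (fun i => xvar (part_u (enum_val i)) * yvar (part_v (enum_val i))) g.
Proof.
rewrite /parting_map /phiQ /rename subst_comp; apply: eq_subst => i.
rewrite (@subst_zvar K _ (Qpart p T u v) _ (fun q => xvar q.1 * yvar q.2)) //.
by apply: imset_f; apply: enum_valP.
Qed.

Lemma embx_zvar a : embx (zvar K _ Mu a) = xvar a.
Proof. exact: subst_zvar_var_in. Qed.

Lemma emby_zvar b : emby (zvar K _ Mv b) = yvar b.
Proof. exact: subst_zvar_var_in. Qed.

Local Notation rho_u := (fun i => zvar K _ Mu (part_u (enum_val i))).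
Local Notation rho_v := (fun i => zvar K _ Mv (part_v (enum_val i))).

Lemma parting_map_mpolyX mm :
  parting_map 'X_[mm] = embx (subst K _ _ rho_u 'X_[mm]) * emby (subst K _ _ rho_v 'X_[mm]).
Proof.
rewrite parting_mapE /Defs.embx /Defs.emby !subst_comp !subst_mpolyX -big_split /=.
by apply: eq_bigr => i _; rewrite exprMn -embx_zvar -emby_zvar.
Qed.

Lemma psi_rho_u g : psi K p Tu (subst K _ _ rho_u g) = subst K _ _ keep_u (psi K p T g).
Proof.
rewrite !psiE !subst_comp; apply: eq_subst => i.
by rewrite (@subst_zvar K _ Mu _ mono) ?imset_monomial_part_u ?part_u_meq ?enum_valP.
Qed.

Lemma psi_rho_v g : psi K p Tv (subst K _ _ rho_v g) = subst K _ _ keep_v (psi K p T g).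
Proof.
rewrite !psiE !subst_comp; apply: eq_subst => i.
by rewrite (@subst_zvar K _ Mv _ mono) ?imset_monomial_part_v ?part_v_meq ?enum_valP.
Qed.

Lemma parting_map_binomial g :
  kernel_binomial (fun j => mono (enum_val j)) g -> ISum (parting_map g).
Proof.
case=> a [b [psi_ab ->]]; rewrite parting_mapE rmorphB /= -!parting_mapE !parting_map_mpolyX.
set A := subst _ _ _ rho_u 'X_[a]; set A' := subst _ _ _ rho_u 'X_[b].
set B1 := subst _ _ _ rho_v 'X_[a]; set B' := subst _ _ _ rho_v 'X_[b].
have -> : embx A * emby B1 - embx A' * emby B' =
          emby B1 * embx (A - A') + embx A' * emby (B1 - B').
  by rewrite sub_mul_mul /Defs.embx /Defs.emby !rmorphB.
apply: ideal_genD; apply/ideal_genMl/ideal_gen_base.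
  left; exists (A - A') => //.
  by rewrite /imset_ideal psiE rmorphB /= -!psiE !psi_rho_u !psiE psi_ab subrr.
right; exists (B1 - B') => //.
by rewrite /imset_ideal psiE rmorphB /= -!psiE !psi_rho_v !psiE psi_ab subrr.
Qed.

Lemma parting_map_kernel f : psi K p T f = 0 -> ISum (parting_map f).
Proof.
move=> psi_f; rewrite parting_mapE; apply: ideal_gen_rmorph (monomial_kernel_binomial _ psi_f).
  by move=> g /parting_map_binomial; rewrite parting_mapE.
by move=> i; apply: imset_monomial_is_monomial.
Qed.

(* [x_a |-> t^(c_a)] and [y_b |-> t^(c_b)] with [t_(uv)] set to 1; by
   [imset_monomial_split] it sends [x_(P_u) y_(P_v)] to [t^(c_P)]. *)
Definition recombine_vars (k : 'I_(#|Mu| + #|Mv|)) : {mpoly K[#|B|]} :=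
  match split k with
  | inl i => mono (enum_val i)
  | inr j => subst K _ _ drop_uv (mono (enum_val j))
  end.

Lemma recombine_embx g : subst K _ _ recombine_vars (embx g) = psi K p Tu g.
Proof.
rewrite /Defs.embx subst_comp psiE; apply: eq_subst => i.
by rewrite substX /recombine_vars (unsplitK (inl i : 'I_#|Mu| + 'I_#|Mv|)).
Qed.

Lemma recombine_emby g :
  subst K _ _ recombine_vars (emby g) = subst K _ _ drop_uv (psi K p Tv g).
Proof.
rewrite /Defs.emby psiE !subst_comp; apply: eq_subst => j.
by rewrite substX /recombine_vars (unsplitK (inr j : 'I_#|Mu| + 'I_#|Mv|)).
Qed.

Lemma recombine_parting_map g : subst K _ _ recombine_vars (parting_map g) = psi K p T g.
Proof.
rewrite parting_mapE subst_comp psiE; apply: eq_subst => i.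
rewrite rmorphM /= -embx_zvar -emby_zvar recombine_embx recombine_emby !psiE.
have PT := enum_valP i.
rewrite (subst_zvar mono (part_u_meq T_tree Tuv PT)) (subst_zvar mono (part_v_meq T_tree Tuv PT)).
by rewrite -imset_monomial_split.
Qed.

Lemma parting_map_kernel_inv f : ISum (parting_map f) -> psi K p T f = 0.
Proof.
move=> If; rewrite -recombine_parting_map; apply: rmorph_ideal_gen_eq0 If.
by move=> g [[a Ia ->] | [b Ib ->]] /=; rewrite ?recombine_embx ?recombine_emby ?Ib ?rmorph0.
Qed.

End ImsetIdealSplitting.

Theorem theorem4p4 (K : fieldType) (p : nat) (T : rel 'I_p) (u v : 'I_p) :
  is_tree p T -> nonleaf_edge p T u v ->
  {in meq p T &, injective (parting p T u v)} /\
  (forall f : {mpoly K[#|meq p T|]},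
     imset_ideal K p T f <->
     fiber_product K (pgraph p) (pgraph p) (meq p (T_u p T u v))
       (meq p (T_v p T u v)) (Qpart p T u v)
       (imset_ideal K p (T_u p T u v)) (imset_ideal K p (T_v p T u v))
       (rename K p T u v f)).
Proof.
move=> T_tree /and3P [Tuv _ _]; split; first exact: parting_inj.
by move=> f; split; [apply: parting_map_kernel | apply: parting_map_kernel_inv].
Qed.
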